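(* Consider the following model. A principal P and an agent A interact over two periods $t\in\{1,2\}$. States $\omega_t\in\{0,1\}$ satisfy $\Pr[\omega_1=1]=\mu_0\in(0,1)$ and $\Pr[\omega_2=\omega\mid\omega_1=\omega]=\rho\in(1/2,1)$. In each period A chooses $e_t\in\{0,1\}$; if $e_t=1$ he observes $\omega_t$, and here if $e_t=0$ he observes nothing (i.e., the free-revelation probability is $\pi=0$). A reports $r_t\in\{\varnothing,\omega_t\}$ if he observed $\omega_t$, else $r_t=\varnothing$. P chooses $x=\hat x(r_1,r_2)$ at the end of period 2. Payoffs: P gets $\mathbb{1}[x=\omega_2]-k(e_1+e_2)$, A gets $x-c(e_1+e_2)$, $c,k>0$; A best-responds, following the recommendation and disclosing when indifferent. Let $\kappa=k/(1-\pi)=k$, $\gamma=c/(1-\pi)=c$, $\mu_2(\varnothing)=\rho\mu_0+(1-\rho)(1-\mu_0)$, and assume $\kappa\in(1-\rho,\min\{\mu_2(\varnothing),1-\mu_2(\varnothing)\}]$ and $\gamma\le\mu_2(\varnothing)$. Then the mechanism with $\sigma_1=0$, $\sigma_2(r_1)=\mathbb{1}[r_1=\varnothing]$ and $\hat x(r_1,r_2)=\mathbb{1}[r_1=\varnothing]\mathbb{1}[r_2=1]$ generates the same outcomes as the baseline mechanism, and therefore it is optimal.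
   Context: The baseline mechanism is the one P would choose if she controlled testing directly and observed all results: for this range of $\kappa$ it does not test in period 1, tests in period 2 when no period-1 result was obtained, and assigns efficiently ($x=1$ iff the posterior probability of $\omega_2=1$ is at least $1/2$); with $\pi=0$ it therefore tests only in period 2 and sets $x=\omega_2$. *)

From Stdlib Require Import Reals Lra Bool.
Open Scope R_scope.

(* Two-period testing model with free-revelation probability pi = 0.
   Reports: None = the empty report (varnothing), Some w = report of state w. *)

Definition b2R (b : bool) : R := if b then 1 else 0.

Definition sumb (f : bool -> R) : R := f true + f false.

Definition bern (p : R) (b : bool) : R := if b then p else 1 - p.

Definition pstate (mu0 rho : R) (w1 w2 : bool) : R :=
  bern mu0 w1 * (if Bool.eqb w2 w1 then rho else 1 - rho).

Definition mu2_empty (mu0 rho : R) : R := rho * mu0 + (1 - rho) * (1 - mu0).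

(* A mechanism: sigma_1 = prob. of recommending a test in period 1,
   sigma_2(r1) = prob. of recommending a test in period 2 given report r1,
   xhat(r1, r2) = decision. *)
Record mech := Mech {
  sig1 : R;
  sig2 : option bool -> R;
  xhat : option bool -> option bool -> bool }.

Definition valid_mech (M : mech) : Prop :=
  0 <= sig1 M <= 1 /\ forall r, 0 <= sig2 M r <= 1.

(* A (pure) strategy of the agent.
   eff1 rec1                 : effort in period 1 given recommendation rec1
   disc1 rec1 w1             : whether to disclose the observed w1
   eff2 rec1 o1 rec2         : effort in period 2 (o1 = observation of period 1)
   disc2 rec1 o1 rec2 w2     : whether to disclose the observed w2 *)
Record strat := Strat {
  eff1 : bool -> bool;
  disc1 : bool -> bool -> bool;
  eff2 : bool -> option bool -> bool -> bool;
  disc2 : bool -> option bool -> bool -> bool -> bool }.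

Section Play.
Variables (M : mech) (s : strat).

Definition obs1 (w1 rec1 : bool) : option bool :=
  if eff1 s rec1 then Some w1 else None.

Definition rep1 (w1 rec1 : bool) : option bool :=
  match obs1 w1 rec1 with
  | Some w => if disc1 s rec1 w then Some w else None
  | None => None
  end.

Definition e2v (w1 rec1 rec2 : bool) : bool := eff2 s rec1 (obs1 w1 rec1) rec2.

Definition rep2 (w1 w2 rec1 rec2 : bool) : option bool :=
  if e2v w1 rec1 rec2 then
    (if disc2 s rec1 (obs1 w1 rec1) rec2 w2 then Some w2 else None)
  else None.

Definition xout (w1 w2 rec1 rec2 : bool) : bool :=
  xhat M (rep1 w1 rec1) (rep2 w1 w2 rec1 rec2).

Definition pw (mu0 rho : R) (w1 w2 rec1 rec2 : bool) : R :=
  pstate mu0 rho w1 w2 * bern (sig1 M) rec1 * bern (sig2 M (rep1 w1 rec1)) rec2.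

Definition expect (mu0 rho : R) (f : bool -> bool -> bool -> bool -> R) : R :=
  sumb (fun w1 => sumb (fun w2 => sumb (fun rec1 => sumb (fun rec2 =>
    pw mu0 rho w1 w2 rec1 rec2 * f w1 w2 rec1 rec2)))).

Definition UA (mu0 rho c : R) : R :=
  expect mu0 rho (fun w1 w2 rec1 rec2 =>
    b2R (xout w1 w2 rec1 rec2)
    - c * (b2R (eff1 s rec1) + b2R (e2v w1 rec1 rec2))).

Definition UP (mu0 rho k : R) : R :=
  expect mu0 rho (fun w1 w2 rec1 rec2 =>
    b2R (Bool.eqb (xout w1 w2 rec1 rec2) w2)
    - k * (b2R (eff1 s rec1) + b2R (e2v w1 rec1 rec2))).

Definition outcome_prob (mu0 rho : R) (a1 a2 a3 a4 a5 : bool) : R :=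
  expect mu0 rho (fun w1 w2 rec1 rec2 =>
    b2R (Bool.eqb w1 a1 && Bool.eqb w2 a2 && Bool.eqb (eff1 s rec1) a3 &&
         Bool.eqb (e2v w1 rec1 rec2) a4 && Bool.eqb (xout w1 w2 rec1 rec2) a5)%bool).

End Play.

Definition best_response (mu0 rho c : R) (M : mech) (s : strat) : Prop :=
  forall s' : strat, UA M s' mu0 rho c <= UA M s mu0 rho c.

Definition baseline_outcome_prob (mu0 rho : R) (w1 w2 e1 e2 x : bool) : R :=
  pstate mu0 rho w1 w2 * b2R (negb e1 && e2 && Bool.eqb x w2)%bool.

Definition Mstar : mech :=
  Mech 0 (fun r1 => b2R (match r1 with None => true | Some _ => false end))
       (fun r1 r2 => (match r1 with None => true | Some _ => false end) &&
                     (match r2 with Some true => true | _ => false end)).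

Definition s_obedient : strat :=
  Strat (fun rec1 => rec1) (fun _ _ => true) (fun _ _ rec2 => rec2)
        (fun _ _ _ _ => true).

From Stdlib Require Import Reals Lra Psatz.
Open Scope R_scope.

(* Under [Mstar] the agent gets [x = 1] only by testing in period 2 and
   reporting [w2 = 1], so every strategy earns at most [Pr[w2 = 1] - c],
   which is what obedience earns.  For the principal, [1 - k] is the
   first-best value: every realization with a test costs at least [k], and a
   branch in which the agent does not test in period 1 either tests in
   period 2 or ends with the decision [xhat M None None], which does not
   depend on the state and is right with probability at most
   [max(mu2, 1 - mu2) <= 1 - k].  This bound holds for every strategy of the
   agent. *)

Definition mu2_given (rho : R) (w1 : bool) : R := if w1 then rho else 1 - rho.

Lemma pstate_bern mu0 rho w1 w2 :
  pstate mu0 rho w1 w2 = bern mu0 w1 * bern (mu2_given rho w1) w2.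
Proof. unfold pstate, bern, mu2_given; destruct w1, w2; simpl; ring. Qed.

Lemma mu2_given_bounds rho w1 : 0 <= rho <= 1 -> 0 <= mu2_given rho w1 <= 1.
Proof. unfold mu2_given; destruct w1; lra. Qed.

Lemma b2R_bounds b : 0 <= b2R b <= 1.
Proof. unfold b2R; destruct b; lra. Qed.

Lemma sumb_bern_le p g B : 0 <= p <= 1 -> (forall b, g b <= B) ->
  sumb (fun b => bern p b * g b) <= B.
Proof.
  intros Hp Hg; unfold sumb, bern.
  pose proof (Hg true); pose proof (Hg false); nra.
Qed.

Lemma sumb_bern_mono p g h : 0 <= p <= 1 -> (forall b, g b <= h b) ->
  sumb (fun b => bern p b * g b) <= sumb (fun b => bern p b * h b).
Proof.
  intros Hp Hg; unfold sumb, bern.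
  pose proof (Hg true); pose proof (Hg false); nra.
Qed.

Lemma sumb_bern0 g : sumb (fun b => bern 0 b * g b) = g false.
Proof. unfold sumb, bern; ring. Qed.

Lemma sumb_bern1 g : sumb (fun b => bern 1 b * g b) = g true.
Proof. unfold sumb, bern; ring. Qed.

Lemma bern_le_1_sub q x k : k <= Rmin q (1 - q) -> bern q x <= 1 - k.
Proof.
  intros Hk; pose proof (Rmin_l q (1 - q)); pose proof (Rmin_r q (1 - q)).
  unfold bern; destruct x; lra.
Qed.

Definition prior_mean (mu0 rho : R) (h : bool -> bool -> R) : R :=
  sumb (fun w1 => bern mu0 w1 * sumb (fun w2 => bern (mu2_given rho w1) w2 * h w1 w2)).

Lemma prior_mean_mono mu0 rho g h : 0 <= mu0 <= 1 -> 0 <= rho <= 1 ->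
  (forall w1 w2, g w1 w2 <= h w1 w2) ->
  prior_mean mu0 rho g <= prior_mean mu0 rho h.
Proof.
  intros Hmu0 Hrho Hgh; unfold prior_mean.
  apply sumb_bern_mono; [exact Hmu0 |]; intro w1.
  apply sumb_bern_mono; [apply mu2_given_bounds, Hrho |]; intro w2.
  apply Hgh.
Qed.

Lemma prior_mean_const mu0 rho B : prior_mean mu0 rho (fun _ _ => B) = B.
Proof. unfold prior_mean, sumb, bern; ring. Qed.

Lemma prior_mean_guess_sub mu0 rho x c :
  prior_mean mu0 rho (fun _ w2 => b2R (Bool.eqb x w2) - c)
  = bern (mu2_empty mu0 rho) x - c.
Proof. unfold prior_mean, sumb, mu2_given, mu2_empty, bern, b2R; destruct x; simpl; ring. Qed.

Definition cond_expect1 (M : mech) (s : strat) (mu0 rho : R)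
    (f : bool -> bool -> bool -> bool -> R) (rec1 : bool) : R :=
  sumb (fun w1 => bern mu0 w1 *
    sumb (fun rec2 => bern (sig2 M (rep1 s w1 rec1)) rec2 *
      sumb (fun w2 => bern (mu2_given rho w1) w2 * f w1 w2 rec1 rec2))).

Lemma expect_cond1 M s mu0 rho f :
  expect M s mu0 rho f
  = sumb (fun rec1 => bern (sig1 M) rec1 * cond_expect1 M s mu0 rho f rec1).
Proof.
  unfold expect, cond_expect1, pw, sumb; rewrite !pstate_bern; ring.
Qed.

Lemma cond_expect1_le_prior M s mu0 rho f h rec1 :
  0 <= mu0 <= 1 -> 0 <= rho <= 1 -> valid_mech M ->
  (forall w1 w2 rec2, f w1 w2 rec1 rec2 <= h w1 w2) ->
  cond_expect1 M s mu0 rho f rec1 <= prior_mean mu0 rho h.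
Proof.
  intros Hmu0 Hrho [_ Hsig2] Hfh; unfold cond_expect1, prior_mean.
  apply sumb_bern_mono; [exact Hmu0 |]; intro w1.
  apply sumb_bern_le; [apply Hsig2 |]; intro rec2.
  apply sumb_bern_mono; [apply mu2_given_bounds, Hrho |]; intro w2.
  apply Hfh.
Qed.

Lemma rep1_untested s w1 rec1 : eff1 s rec1 = false -> rep1 s w1 rec1 = None.
Proof. intros E; unfold rep1, obs1; rewrite E; reflexivity. Qed.

Lemma e2v_untested s w1 rec1 rec2 :
  eff1 s rec1 = false -> e2v s w1 rec1 rec2 = eff2 s rec1 None rec2.
Proof. intros E; unfold e2v, obs1; rewrite E; reflexivity. Qed.

Lemma xout_untested2 M s w1 w2 rec1 rec2 : e2v s w1 rec1 rec2 = false ->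
  xout M s w1 w2 rec1 rec2 = xhat M (rep1 s w1 rec1) None.
Proof. intros E; unfold xout, rep2; rewrite E; reflexivity. Qed.

(* Without a period-1 test the period-2 recommendation is drawn independently
   of the state, so the conditional expectation factors through the prior. *)
Lemma cond_expect1_untested M s mu0 rho f rec1 : eff1 s rec1 = false ->
  cond_expect1 M s mu0 rho f rec1
  = sumb (fun rec2 => bern (sig2 M None) rec2 *
      prior_mean mu0 rho (fun w1 w2 => f w1 w2 rec1 rec2)).
Proof.
  intros E; unfold cond_expect1, prior_mean, sumb.
  rewrite !(rep1_untested s _ rec1 E); ring.
Qed.

Lemma UP_le_first_best M s mu0 rho k :
  0 <= mu0 <= 1 -> 0 <= rho <= 1 -> 0 <= k ->
  k <= Rmin (mu2_empty mu0 rho) (1 - mu2_empty mu0 rho) -> valid_mech M ->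
  UP M s mu0 rho k <= 1 - k.
Proof.
  intros Hmu0 Hrho Hk Hkmin HM.
  assert (Htested : forall x e1 e2, e1 = true \/ e2 = true ->
            b2R x - k * (b2R e1 + b2R e2) <= 1 - k).
  { intros x e1 e2 He; pose proof (b2R_bounds x).
    pose proof (b2R_bounds e1); pose proof (b2R_bounds e2).
    destruct He as [-> | ->]; change (b2R true) with 1; nra. }
  unfold UP; rewrite expect_cond1.
  apply sumb_bern_le; [apply HM |]; intro rec1.
  destruct (eff1 s rec1) eqn:E1.
  - rewrite <- (prior_mean_const mu0 rho (1 - k)).
    apply cond_expect1_le_prior; [exact Hmu0 | exact Hrho | exact HM |].
    intros w1 w2 rec2; apply Htested; left; exact E1.
  - rewrite cond_expect1_untested by exact E1.
    apply sumb_bern_le; [apply HM |]; intro rec2.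
    destruct (eff2 s rec1 None rec2) eqn:E2.
    + rewrite <- (prior_mean_const mu0 rho (1 - k)).
      apply prior_mean_mono; [exact Hmu0 | exact Hrho |]; intros w1 w2.
      apply Htested; right; rewrite e2v_untested; assumption.
    + assert (Hno2 : forall w1, e2v s w1 rec1 rec2 = false)
        by (intro w1; rewrite e2v_untested; assumption).
      apply Rle_trans with
        (prior_mean mu0 rho (fun _ w2 => b2R (Bool.eqb (xhat M None None) w2) - 0)).
      * apply prior_mean_mono; [exact Hmu0 | exact Hrho |]; intros w1 w2.
        rewrite (xout_untested2 M s w1 w2 rec1 rec2 (Hno2 w1)),
          (rep1_untested s w1 rec1 E1), E1, Hno2.
        change (b2R false) with 0; lra.
      * rewrite prior_mean_guess_sub, Rminus_0_r; apply bern_le_1_sub, Hkmin.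
Qed.

Lemma valid_mech_Mstar : valid_mech Mstar.
Proof. split; [simpl; lra |]; intros [r |]; simpl; lra. Qed.

Lemma xout_Mstar_le_state s w1 w2 rec1 rec2 :
  b2R (xout Mstar s w1 w2 rec1 rec2) <= b2R w2.
Proof.
  unfold xout, rep2.
  destruct (e2v s w1 rec1 rec2), (disc2 s rec1 (obs1 s w1 rec1) rec2 w2),
    (rep1 s w1 rec1), w2; simpl; lra.
Qed.

Lemma xout_Mstar_untested2 s w1 w2 rec1 rec2 : e2v s w1 rec1 rec2 = false ->
  xout Mstar s w1 w2 rec1 rec2 = false.
Proof. intros E; rewrite xout_untested2 by exact E; destruct (rep1 s w1 rec1); reflexivity. Qed.

Lemma UA_Mstar_le s mu0 rho c :
  0 <= mu0 <= 1 -> 0 <= rho <= 1 -> 0 <= c <= mu2_empty mu0 rho ->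
  UA Mstar s mu0 rho c <= mu2_empty mu0 rho - c.
Proof.
  intros Hmu0 Hrho Hc.
  assert (Htested : forall w1 w2 rec1 rec2 e1 e2, e1 = true \/ e2 = true ->
            b2R (xout Mstar s w1 w2 rec1 rec2) - c * (b2R e1 + b2R e2)
            <= b2R (Bool.eqb true w2) - c).
  { intros w1 w2 rec1 rec2 e1 e2 He.
    pose proof (xout_Mstar_le_state s w1 w2 rec1 rec2).
    pose proof (b2R_bounds e1); pose proof (b2R_bounds e2).
    replace (Bool.eqb true w2) with w2 by (destruct w2; reflexivity).
    destruct He as [-> | ->]; change (b2R true) with 1; nra. }
  assert (Hmean : prior_mean mu0 rho (fun _ w2 => b2R (Bool.eqb true w2) - c)
                 = mu2_empty mu0 rho - c) by apply prior_mean_guess_sub.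
  unfold UA; rewrite expect_cond1, sumb_bern0.
  destruct (eff1 s false) eqn:E1.
  - rewrite <- Hmean.
    apply cond_expect1_le_prior; [exact Hmu0 | exact Hrho | exact valid_mech_Mstar |].
    intros w1 w2 rec2; apply Htested; left; exact E1.
  - rewrite cond_expect1_untested, sumb_bern1 by exact E1.
    destruct (eff2 s false None true) eqn:E2.
    + rewrite <- Hmean.
      apply prior_mean_mono; [exact Hmu0 | exact Hrho |]; intros w1 w2.
      apply Htested; right; rewrite e2v_untested; assumption.
    + apply Rle_trans with (prior_mean mu0 rho (fun _ _ => 0)); [| rewrite prior_mean_const; lra].
      apply prior_mean_mono; [exact Hmu0 | exact Hrho |]; intros w1 w2.
      assert (Hno2 : e2v s w1 false true = false) by (rewrite e2v_untested; assumption).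
      rewrite xout_Mstar_untested2, E1, Hno2 by exact Hno2.
      change (b2R false) with 0; lra.
Qed.

Ltac unfold_obedient_play :=
  cbv beta iota delta [UP UA outcome_prob baseline_outcome_prob expect sumb pw pstate
    bern b2R xout rep1 rep2 obs1 e2v Mstar s_obedient sig1 sig2 xhat
    eff1 eff2 disc1 disc2 Bool.eqb negb andb mu2_empty].

Lemma UA_Mstar_obedient mu0 rho c :
  UA Mstar s_obedient mu0 rho c = mu2_empty mu0 rho - c.
Proof. unfold_obedient_play; ring. Qed.

Lemma UP_Mstar_obedient mu0 rho k : UP Mstar s_obedient mu0 rho k = 1 - k.
Proof. unfold_obedient_play; ring. Qed.

Lemma outcome_prob_Mstar_obedient mu0 rho w1 w2 e1 e2 x :
  outcome_prob Mstar s_obedient mu0 rho w1 w2 e1 e2 x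
  = baseline_outcome_prob mu0 rho w1 w2 e1 e2 x.
Proof. destruct w1, w2, e1, e2, x; unfold_obedient_play; ring. Qed.

Theorem lemmaC2 (mu0 rho c k : R) :
  0 < mu0 < 1 -> / 2 < rho < 1 -> 0 < c -> 0 < k ->
  1 - rho < k -> k <= Rmin (mu2_empty mu0 rho) (1 - mu2_empty mu0 rho) ->
  c <= mu2_empty mu0 rho ->
  valid_mech Mstar /\
  best_response mu0 rho c Mstar s_obedient /\
  (forall w1 w2 e1 e2 x : bool,
      outcome_prob Mstar s_obedient mu0 rho w1 w2 e1 e2 x
      = baseline_outcome_prob mu0 rho w1 w2 e1 e2 x) /\
  (forall (M : mech) (s : strat), valid_mech M -> best_response mu0 rho c M s ->
      UP M s mu0 rho k <= UP Mstar s_obedient mu0 rho k).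
Proof.
  intros Hmu0 Hrho Hc Hk _ Hkmin Hcmu2.
  assert (Hmu0' : 0 <= mu0 <= 1) by lra.
  assert (Hrho' : 0 <= rho <= 1) by lra.
  split; [| split; [| split]].
  - exact valid_mech_Mstar.
  - intros s; rewrite UA_Mstar_obedient; apply UA_Mstar_le; lra.
  - exact (outcome_prob_Mstar_obedient mu0 rho).
  - intros M s HM _; rewrite UP_Mstar_obedient.
    apply UP_le_first_best; [exact Hmu0' | exact Hrho' | lra | exact Hkmin | exact HM].
Qed.
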